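(* Let $n\ge 2$ and let $d=(d_1,\dots,d_n)$ with $d_1=\tfrac34$, $d_2=\tfrac14$ and $d_i=0$ for $3\le i\le n$. Then for every simple game $\chi$ on $N=\{1,\dots,n\}$, $$\|\mathcal{BZ}(\chi)-d\|_1=\sum_{i=1}^n\left|\mathcal{BZ}(\chi,i)-d_i\right|\ge\frac19.$$
   Context: A simple game on $N=\{1,\dots,n\}$ is a monotone Boolean function $\chi:2^N\to\{0,1\}$ with $\chi(\emptyset)=0$ and $\chi(N)=1$. An $i$-swing is a set $U\subseteq N\setminus\{i\}$ with $\chi(U)=0$ and $\chi(U\cup\{i\})=1$. The Banzhaf index is $\mathcal{BZ}(\chi,i)=\eta_i/\sum_{k=1}^n\eta_k$, where $\eta_i$ is the number of $i$-swings, and $\mathcal{BZ}(\chi)=(\mathcal{BZ}(\chi,1),\dots,\mathcal{BZ}(\chi,n))$. *)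

(* Players N = {1,...,n} are represented by 'I_n
   (paper's player k corresponds to the ordinal k-1). *)
From HB Require Import structures.
From mathcomp Require Import all_boot all_order all_algebra.
Set Implicit Arguments. Unset Strict Implicit. Unset Printing Implicit Defensive.
Import Order.TTheory GRing.Theory Num.Theory.
Local Open Scope ring_scope.

Definition simple_game (n : nat) (chi : {set 'I_n} -> bool) : Prop :=
  [/\ (forall U V : {set 'I_n}, U \subset V -> chi U -> chi V),
      chi set0 = false & chi [set: 'I_n] = true].

Definition swings (n : nat) (chi : {set 'I_n} -> bool) (i : 'I_n) : nat :=
  #|[set U : {set 'I_n} | [&& i \notin U, ~~ chi U & chi (i |: U)]]|.

Definition banzhaf (n : nat) (chi : {set 'I_n} -> bool) (i : 'I_n) : rat :=
  (swings chi i)%:R / (\sum_(k < n) swings chi k)%:R.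

Definition dvec (n : nat) (i : 'I_n) : rat :=
  if val i == 0%N then 3%:R / 4%:R
  else if val i == 1%N then 1%:R / 4%:R else 0.

From HB Require Import structures.
From mathcomp Require Import all_boot all_order all_algebra.
From mathcomp Require Import zify lra.
Set Implicit Arguments. Unset Strict Implicit. Unset Printing Implicit Defensive.
Import Order.TTheory GRing.Theory Num.Theory.

(* Call p, q the players 1 and 2 and K the remaining players.
   Every coalition is R, p|:R, q|:R or p|:q|:R for a unique R \subset K, so
   chi is described on the cube of subsets of K by chi itself and by the
   monotone functions u R = chi (p|:R), v R = chi (q|:R).  Writing |f| for the
   number of R \subset K with f R, counting swings face by face gives
   (a) e_p + 2|v| = e_q + 2|u|,
   (b) e_p + e_q <= 2 * 2^|K|,
   (c) the edge boundaries of u and v are made of swings of players of K.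
   The edge-isoperimetric inequality 2|f||~f| <= 2^|K| * boundary(f), proved
   by induction on |K|, turns (c) into a lower bound on the total swing count
   e_K of K in terms of |u| and |v|.  A real inequality then shows that
   |e_p - 3S/4| + |e_q - S/4| + e_K >= S/9 where S = e_p + e_q + e_K, and
   dividing by S gives the theorem. *)

Section SubcubeSums.
Variable T : finType.

Lemma subset_setU1_notin (k : T) (K R : {set T}) : k \notin K ->
  (R \subset K) = (R \subset k |: K) && (k \notin R).
Proof. by move=> kK; rewrite -subsetD1 setU1K. Qed.

Lemma notin_subset (k : T) (K R : {set T}) : k \notin K -> R \subset K -> k \notin R.
Proof. by move=> kK sRK; rewrite (subset_setU1_notin _ kK) in sRK; case/andP: sRK. Qed.

Lemma sum_subsets_setU1 (k : T) (K : {set T}) (F : {set T} -> nat) : k \notin K ->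
  \sum_(R : {set T} | R \subset k |: K) F R
  = \sum_(R : {set T} | R \subset K) (F R + F (k |: R)).
Proof.
move=> kK; rewrite big_split /= (bigID (fun R : {set T} => k \in R)) /= addnC.
congr (_ + _); first by apply: eq_bigl => R; rewrite (subset_setU1_notin _ kK).
rewrite (reindex_onto (fun R : {set T} => k |: R) (fun R : {set T} => R :\ k)) /=;
  last by move=> R /andP [_ kR]; rewrite setD1K.
apply: eq_bigl => R; rewrite setU11 andbT (subset_setU1_notin _ kK).
case kR: (k \in R) => /=.
  rewrite andbF; apply/negbTE; rewrite negb_and; apply/orP; right; apply/eqP => eR.
  by move: (setD11 k (k |: R)); rewrite eR kR.
by rewrite setU1K ?kR // eqxx !andbT subUset sub1set setU11.
Qed.

End SubcubeSums.

Section EdgeIsoperimetry.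
Variable T : finType.
Implicit Types (f : {set T} -> bool) (K : {set T}).

Definition count_in f K : nat := \sum_(R : {set T} | R \subset K) (f R : nat).

Definition edge_boundary f K : nat :=
  \sum_(j in K) \sum_(R : {set T} | R \subset K) ((j \notin R) && (f R != f (j |: R)) : nat).

Lemma count_in_compl f K : count_in f K + count_in (fun R => ~~ f R) K = 2 ^ #|K|.
Proof.
rewrite /count_in -big_split /= -card_powerset -sum1_card.
by apply: eq_big => [R|R _]; rewrite ?powersetE //; case: (f R).
Qed.

Lemma count_in_set0 f : count_in f set0 = f set0.
Proof.
rewrite /count_in (eq_bigl (pred1 set0)) ?big_pred1_eq // => R.
by rewrite subset0.
Qed.

Lemma count_in_setU1 f k K : k \notin K ->
  count_in f (k |: K) = count_in f K + count_in (fun R => f (k |: R)) K.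
Proof. by move=> kK; rewrite /count_in sum_subsets_setU1 // big_split. Qed.

Lemma edge_boundary_setU1 f k K : k \notin K -> edge_boundary f (k |: K) =
  \sum_(R : {set T} | R \subset K) (f R != f (k |: R) : nat)
  + edge_boundary f K + edge_boundary (fun R => f (k |: R)) K.
Proof.
move=> kK; rewrite /edge_boundary big_setU1 //= -addnA; congr (_ + _).
  rewrite sum_subsets_setU1 //; apply: eq_bigr => R sRK.
  by rewrite (notin_subset kK sRK) setU11 /= addn0.
rewrite -big_split /=; apply: eq_bigr => j jK.
rewrite sum_subsets_setU1 // -big_split /=; apply: eq_bigr => R _; congr (_ + _).
have jk : j != k by apply: contraNneq kK => <-.
by rewrite in_setU1 (negPf jk) /= setUCA.
Qed.

Lemma edge_isoperimetric f K :
  2 * count_in f K * count_in (fun R => ~~ f R) K <= 2 ^ #|K| * edge_boundary f K.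
Proof.
move: {2}#|K| (erefl #|K|) => m; elim: m f K => [|m IH] f K cK.
  by move/cards0_eq: cK => ->; rewrite !count_in_set0; case: (f set0).
have [k kK] : exists k, k \in K by apply/card_gt0P; rewrite cK.
have kK' : k \notin K :\ k by rewrite setD11.
have cK' : #|K :\ k| = m by move: cK; rewrite (cardsD1 k K) kK add1n => -[].
rewrite cK expnS -(setD1K kK) !count_in_setU1 // edge_boundary_setU1 //.
set L := K :\ k in kK' cK' *; set f1 := fun R => f (k |: R).
have IH0 := IH f L cK'; have IH1 := IH f1 L cK'.
have S0 := count_in_compl f L; have S1 := count_in_compl f1 L.
rewrite cK' in IH0 IH1 S0 S1.
set D := \sum_(R : {set T} | R \subset L) _.
have shift0 : count_in f L <= count_in f1 L + D.
  rewrite /count_in /D -big_split /=; apply: leq_sum => R _.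
  by rewrite /f1; case: (f R); case: (f (k |: R)).
have shift1 : count_in f1 L <= count_in f L + D.
  rewrite /count_in /D -big_split /=; apply: leq_sum => R _.
  by rewrite /f1; case: (f R); case: (f (k |: R)).
(* With b_i = h - a_i, the claim is 2(a0 + a1)(2h - a0 - a1) <= 2h(D + B0 + B1),
   which follows from the two faces and |a0 - a1| <= D. *)
move: IH0 IH1 S0 S1 shift0 shift1.
move: (count_in f L) (count_in (fun R => ~~ f R) L).
move: (count_in f1 L) (count_in (fun R => ~~ f1 R) L).
move: (2 ^ m) (edge_boundary f L) (edge_boundary f1 L) D => h B0 B1 D a1 b1 a0 b0.
nia.
Qed.

End EdgeIsoperimetry.

Local Open Scope ring_scope.

(* The numerical core: e1, e2 are the swing counts of players 1, 2, c the
   swing count of the others, a, b the sizes of u, v in a cube of size M. *)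
Lemma distance_bound (R : realFieldType) (e1 e2 c a b M : R) :
  0 <= e1 -> 0 <= e2 -> 0 <= c -> 0 < M -> 0 <= a -> a <= M -> 0 <= b -> b <= M ->
  e1 + 2 * b = e2 + 2 * a -> e1 + e2 <= 2 * M ->
  2 * a * (M - a) + 2 * b * (M - b) <= M * c ->
  (e1 + e2 + c) / 9 <= `|e1 - 3 / 4 * (e1 + e2 + c)| + `|e2 - 1 / 4 * (e1 + e2 + c)| + c.
Proof.
move=> he1 he2 hc hM ha haM hb hbM balance pair_le iso.
have n1 := ler_norm (e1 - 3 / 4 * (e1 + e2 + c)).
have n2 := ler_norm (e2 - 1 / 4 * (e1 + e2 + c)).
have n1' := ler_norm (- (e1 - 3 / 4 * (e1 + e2 + c))); rewrite normrN in n1'.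
have n2' := ler_norm (- (e2 - 1 / 4 * (e1 + e2 + c))); rewrite normrN in n2'.
(* If player 2 swings at least as often as player 1 the bound is easy. *)
have [ab|ba] := lerP b a; last by lra.
(* With d = a - b = (e1 - e2) / 2, the isoperimetric bound gives 2d(M-d) <= cM. *)
have [d d_def] : {d | d = a - b} by exists (a - b).
have iso_d : 2 * d * (M - d) <= c * M.
  have : 0 <= b * (M - a) by apply: mulr_ge0; lra.
  nra.
(* Two regimes: for small d this yields e_K >= 22 d / 25, for large d it
   yields 36 d + 41 e_K >= 26 M; either suffices. *)
have [dsmall|dlarge] := lerP (25 * d) (14 * M).
  have : 0 <= d * (14 * M - 25 * d) by apply: mulr_ge0; lra.
  have : 22 * d * M <= 25 * c * M by nra.
  rewrite ler_pM2r //; lra.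
have : 0 <= (25 * d - 14 * M) * (M - d) by apply: mulr_ge0; lra.
have : 0 <= (36 * d - 26 * M + 41 * c) * M by nra.
rewrite pmulr_lge0 //; lra.
Qed.

(* Dividing by the total S = x + y + z; when S = 0 the left side is 1. *)
Lemma normalized_distance_bound (R : realFieldType) (x y z : R) :
  0 <= x -> 0 <= y -> 0 <= z ->
  (x + y + z) / 9 <= `|x - 3 / 4 * (x + y + z)| + `|y - 1 / 4 * (x + y + z)| + z ->
  1 / 9 <= `|x / (x + y + z) - 3 / 4| + `|y / (x + y + z) - 1 / 4| + z / (x + y + z).
Proof.
move=> hx hy hz; set S := x + y + z => bound.
have [S0|S_neq0] := eqVneq S 0.
  rewrite S0 invr0 !mulr0 !sub0r !normrN !ger0_norm ?addr0; lra.
have S_pos : 0 < S by rewrite lt_def S_neq0 /S; lra.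
have scale (t r : R) : `|t / S - r| = `|t - r * S| / S.
  by rewrite -[in RHS](mulfVK S_neq0 t) -mulrBl normrM (gtr0_norm S_pos) mulfK.
by rewrite !scale -!mulrDl ler_pdivlMr // mul1r mulrC.
Qed.

Lemma swings_sum (n : nat) (chi : {set 'I_n} -> bool) (i : 'I_n) :
  swings chi i = (\sum_(U : {set 'I_n}) ([&& i \notin U, ~~ chi U & chi (i |: U)] : nat))%N.
Proof. by rewrite /swings -sum1_card big_mkcond /=; apply: eq_bigr => U _; rewrite inE. Qed.

Lemma neq_monotone (x y : bool) : (x -> y) -> (x != y) = ~~ x && y.
Proof. by case: x; case: y => // /(_ isT). Qed.

Section PairDecomposition.
Variables (n : nat) (chi : {set 'I_n} -> bool).
Hypothesis chi_mono : forall U V : {set 'I_n}, U \subset V -> chi U -> chi V.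
Variables p q : 'I_n.
Hypothesis p_neq_q : p != q.

Let K : {set 'I_n} := ~: [set p; q].
Let u (R : {set 'I_n}) : bool := chi (p |: R).
Let v (R : {set 'I_n}) : bool := chi (q |: R).
Let w (R : {set 'I_n}) : bool := chi (p |: (q |: R)).

Let p_notin_K : p \notin K. Proof. by rewrite !inE eqxx. Qed.
Let q_notin_K : q \notin K. Proof. by rewrite !inE eqxx orbT. Qed.

Let chi_setU1 (x : 'I_n) (R : {set 'I_n}) : chi R -> chi (x |: R).
Proof. exact/chi_mono/subsetUr. Qed.

Let monotone_faces (R : {set 'I_n}) :
  [/\ chi R -> u R, chi R -> v R, u R -> w R & v R -> w R].
Proof.
split; rewrite /u /v /w; try exact: chi_setU1.
by rewrite setUCA; apply: chi_setU1.
Qed.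

Lemma sum_coalitions (F : {set 'I_n} -> nat) : (\sum_(U : {set 'I_n}) F U =
  \sum_(R : {set 'I_n} | R \subset K) (F R + F (p |: R) + F (q |: R) + F (p |: (q |: R))))%N.
Proof.
have p_notin_qK : p \notin q |: K by rewrite !inE eqxx (negPf p_neq_q).
have -> : \sum_(U : {set 'I_n}) F U = (\sum_(U : {set 'I_n} | U \subset p |: (q |: K)) F U)%N.
  apply: eq_bigl => U; apply/esym/subsetP => x _.
  by rewrite !inE; case: (x == p); case: (x == q).
rewrite sum_subsets_setU1 // sum_subsets_setU1 //.
by apply: eq_bigr => R _; rewrite !addnA.
Qed.

Lemma swings_p : swings chi p =
  (\sum_(R : {set 'I_n} | R \subset K) ((~~ chi R && u R : nat) + (~~ v R && w R)))%N.
Proof.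
rewrite swings_sum sum_coalitions; apply: eq_bigr => R sRK.
by rewrite (notin_subset p_notin_K sRK) !in_setU1 eqxx (negPf p_neq_q)
  (notin_subset p_notin_K sRK) /= !addn0.
Qed.

Lemma swings_q : swings chi q =
  (\sum_(R : {set 'I_n} | R \subset K) ((~~ chi R && v R : nat) + (~~ u R && w R)))%N.
Proof.
rewrite swings_sum sum_coalitions; apply: eq_bigr => R sRK.
rewrite (notin_subset q_notin_K sRK) !in_setU1 eqxx eq_sym (negPf p_neq_q).
by rewrite (notin_subset q_notin_K sRK) /= !addn0 /w setUCA.
Qed.

Lemma swings_balance :
  (swings chi p + 2 * count_in v K = swings chi q + 2 * count_in u K)%N.
Proof.
rewrite swings_p swings_q /count_in !mul2n -!addnn -!big_split /=.
apply: eq_bigr => R _; case: (monotone_faces R).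
by case: (chi R); case: (u R); case: (v R); case: (w R) => //= *; lia.
Qed.

(* (b): per R, at most two of the four p- and q-swings can occur. *)
Lemma swings_pair_le : (swings chi p + swings chi q <= 2 * 2 ^ #|K|)%N.
Proof.
rewrite swings_p swings_q -(count_in_compl u) /count_in mul2n -addnn -!big_split /=.
apply: leq_sum => R _; case: (monotone_faces R).
by case: (chi R); case: (u R); case: (v R); case: (w R) => //= *; lia.
Qed.

(* (c): a boundary edge of u or v in direction k \in K is a swing of k. *)
Lemma boundary_le_swings :
  (edge_boundary u K + edge_boundary v K <= \sum_(k in K) swings chi k)%N.
Proof.
rewrite /edge_boundary -big_split /=; apply: leq_sum => k kK.
rewrite swings_sum sum_coalitions -big_split /=; apply: leq_sum => R _.
have kp : k != p by apply: contraNneq p_notin_K => <-.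
have kq : k != q by apply: contraNneq q_notin_K => <-.
rewrite !in_setU1 (negPf kp) (negPf kq) /= /u /v.
rewrite (setUCA [set k] [set p] R) (setUCA [set k] [set q] R).
case: (k \in R) => //=.
have up : chi (p |: R) -> chi (p |: (k |: R)) by rewrite setUCA; apply: chi_setU1.
have vq : chi (q |: R) -> chi (q |: (k |: R)) by rewrite setUCA; apply: chi_setU1.
rewrite (neq_monotone up) (neq_monotone vq).
by apply: leq_trans (leq_addr _ _); rewrite -addnA leq_addl.
Qed.

Lemma total_swings : (\sum_(k < n) swings chi k =
  swings chi p + swings chi q + \sum_(k in K) swings chi k)%N.
Proof.
rewrite (bigD1 p) //= (bigD1 q) 1?eq_sym //= addnA; congr (_ + _).
by apply: eq_bigl => k; rewrite !inE negb_or.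
Qed.

Lemma pair_distance_bound (R : realFieldType) :
  let e_p := swings chi p in let e_q := swings chi q in
  let e_K := (\sum_(k in K) swings chi k)%N in
  (1 / 9 <= `|e_p%:R / (e_p + e_q + e_K)%:R - 3 / 4| + `|e_q%:R / (e_p + e_q + e_K)%:R - 1 / 4|
            + e_K%:R / (e_p + e_q + e_K)%:R :> R : Prop).
Proof.
move=> e_p e_q e_K; rewrite !natrD; apply: normalized_distance_bound; rewrite ?ler0n //.
pose a := count_in u K; pose a' := count_in (fun R => ~~ u R) K.
pose b := count_in v K; pose b' := count_in (fun R => ~~ v R) K; pose M := (2 ^ #|K|)%N.
have iso : (2 * a * a' + 2 * b * b' <= M * e_K)%N.
  apply: leq_trans (leq_add (edge_isoperimetric u K) (edge_isoperimetric v K)) _.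
  by rewrite -mulnDr leq_mul2l boundary_le_swings orbT.
have iso_R : 2 * a%:R * a'%:R + 2 * b%:R * b'%:R <= M%:R * e_K%:R :> R.
  by rewrite -!natrM -natrD ler_nat.
have sum_a : a%:R + a'%:R = M%:R :> R by rewrite -natrD count_in_compl.
have sum_b : b%:R + b'%:R = M%:R :> R by rewrite -natrD count_in_compl.
have balance : e_p%:R + 2 * b%:R = e_q%:R + 2 * a%:R :> R.
  by rewrite -!natrM -!natrD swings_balance.
have pair_le : e_p%:R + e_q%:R <= 2 * M%:R :> R.
  by rewrite -natrM -natrD ler_nat swings_pair_le.
have M_pos : 0 < M%:R :> R by rewrite ltr0n expn_gt0.
have a'_ge0 := ler0n R a'; have b'_ge0 := ler0n R b'.
apply: (distance_bound (ler0n _ _) (ler0n _ _) (ler0n _ _) M_pos (ler0n _ _) _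
         (ler0n _ _) _ balance pair_le); [lra | lra |].
have -> : M%:R - a%:R = a'%:R :> R by lra.
by have -> : M%:R - b%:R = b'%:R :> R by lra.
Qed.

End PairDecomposition.

Lemma banzhaf_distance_split (n : nat) (chi : {set 'I_n} -> bool) (p q : 'I_n) :
  val p = 0%N -> val q = 1%N ->
  \sum_(i < n) `|banzhaf chi i - dvec i| = `|banzhaf chi p - 3 / 4|
    + `|banzhaf chi q - 1 / 4| + \sum_(k in ~: [set p; q]) banzhaf chi k.
Proof.
move=> p0 q1; have p_neq_q : p != q by rewrite -val_eqE p0 q1.
rewrite (bigD1 p) // (bigD1 q) 1?eq_sym //= addrA /dvec p0 q1 /=.
congr (_ + _); apply: eq_big => [k|k]; first by rewrite !inE negb_or.
case/andP=> kp kq; rewrite -val_eqE p0 in kp; rewrite -val_eqE q1 in kq.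
by rewrite (negPf kp) (negPf kq) subr0 ger0_norm // divr_ge0.
Qed.

Unset Implicit Arguments.
Theorem mainTheorem7 (n : nat) (hn : (2 <= n)%N) (chi : {set 'I_n} -> bool)
  (hchi : simple_game chi) :
  1%:R / 9%:R <= \sum_(i < n) `|banzhaf chi i - dvec i|.
Proof.
case: hchi => chi_mono _ _.
pose p : 'I_n := Ordinal (ltnW hn); pose q : 'I_n := Ordinal hn.
have p_neq_q : p != q by [].
rewrite (banzhaf_distance_split chi (p := p) (q := q)) //.
rewrite /banzhaf (total_swings chi p_neq_q) -mulr_suml -natr_sum.
exact: pair_distance_bound.
Qed.
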